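(* Let $H$ be a real Hilbert space, $f:H\to\mathbb{R}\cup\{+\infty\}$ a proper lower semicontinuous function, $\bar x\in\operatorname{dom}f$, $p\in\partial_pf(\bar x)$, and $A\subset H$ a nonempty compact set. The following are equivalent: (i) there exists $\beta>0$ such that $f''_-(\bar x,p,h)\ge\beta$ holds uniformly with respect to $h\in A$; (ii) there exists $\beta>0$ such that $f''_-(\bar x,p,h)\ge\beta$ for all $h\in A$; (iii) $f''_-(\bar x,p,h)>0$ for all $h\in A$.
   Context: $B_H$ is the closed unit ball of $H$. Proximal subdifferential: $\zeta\in\partial_p f(x)$ iff there exist $\sigma,\delta>0$ with $f(y)\ge f(x)+\langle\zeta,y-x\rangle-\frac{\sigma}{2}\|y-x\|^2$ whenever $\|y-x\|<\delta$. $\Delta_2 f(\bar x,p,t,u):=\frac{f(\bar x+tu)-f(\bar x)-t\langle p,u\rangle}{\frac12t^2}$ for $t>0$, and $f''_-(\bar x,p,h):=\liminf_{h'\to h,\,t\downarrow0}\Delta_2f(\bar x,p,t,h')$. Definition: for $\beta>0$ and nonempty $A\subset H$, ''$f''_-(\bar x,p,h)\ge\beta$ holds uniformly with respect to $h\in A$'' means that for every $\varepsilon>0$ there exists $\delta>0$ such that $\Delta_2f(\bar x,p,t,h)\ge\beta-\varepsilon$ for all $t\in(0,\delta)$ and all $h\in A+\delta B_H$. *)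

From Stdlib Require Import Reals Lra List ClassicalEpsilon.
Open Scope R_scope.

Record Hilbert := {
  hT :> Type;
  hzero : hT;
  hadd : hT -> hT -> hT;
  hopp : hT -> hT;
  hscal : R -> hT -> hT;
  hinner : hT -> hT -> R;
  hadd_assoc : forall x y z, hadd x (hadd y z) = hadd (hadd x y) z;
  hadd_comm : forall x y, hadd x y = hadd y x;
  hadd_zero : forall x, hadd x hzero = x;
  hadd_opp : forall x, hadd x (hopp x) = hzero;
  hscal_one : forall x, hscal 1 x = x;
  hscal_assoc : forall a b x, hscal a (hscal b x) = hscal (a * b) x;
  hscal_distr_l : forall a x y, hscal a (hadd x y) = hadd (hscal a x) (hscal a y);
  hscal_distr_r : forall a b x, hscal (a + b) x = hadd (hscal a x) (hscal b x);
  hinner_sym : forall x y, hinner x y = hinner y x;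
  hinner_add_l : forall x y z, hinner (hadd x y) z = hinner x z + hinner y z;
  hinner_scal_l : forall a x y, hinner (hscal a x) y = a * hinner x y;
  hinner_pos : forall x, 0 <= hinner x x;
  hinner_def : forall x, hinner x x = 0 -> x = hzero;
  hcomplete : forall u : nat -> hT,
    (forall eps, eps > 0 -> exists N, forall m n, (N <= m)%nat -> (N <= n)%nat ->
        sqrt (hinner (hadd (u m) (hopp (u n))) (hadd (u m) (hopp (u n)))) < eps) ->
    exists l, forall eps, eps > 0 -> exists N, forall n, (N <= n)%nat ->
        sqrt (hinner (hadd (u n) (hopp l)) (hadd (u n) (hopp l))) < eps
}.

Definition hnorm {H : Hilbert} (x : H) : R := sqrt (hinner H x x).
Definition hsub {H : Hilbert} (x y : H) : H := hadd H x (hopp H y).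

Inductive Rinf := RFin (r : R) | RPinf.
(* full extended reals, for liminf values *)
Inductive Rbar := Fin (r : R) | Pinf | Minf.

Definition Rbar_le (a b : Rbar) : Prop :=
  match a, b with
  | Minf, _ => True
  | _, Pinf => True
  | Fin x, Fin y => x <= y
  | _, _ => False
  end.
Definition Rbar_lt (a b : Rbar) : Prop := Rbar_le a b /\ a <> b.

Definition Rbar_is_lub (E : Rbar -> Prop) (s : Rbar) : Prop :=
  (forall x, E x -> Rbar_le x s) /\ (forall b, (forall x, E x -> Rbar_le x b) -> Rbar_le s b).
Definition Rbar_is_glb (E : Rbar -> Prop) (s : Rbar) : Prop :=
  (forall x, E x -> Rbar_le s x) /\ (forall b, (forall x, E x -> Rbar_le b x) -> Rbar_le b s).

(* supremum / infimum of a set of extended reals (they always exist) *)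
Definition Rbar_sup (E : Rbar -> Prop) : Rbar :=
  epsilon (inhabits Pinf) (fun s => Rbar_is_lub E s).
Definition Rbar_inf (E : Rbar -> Prop) : Rbar :=
  epsilon (inhabits Pinf) (fun s => Rbar_is_glb E s).

Section Notions.
Variable H : Hilbert.

Definition proper (f : H -> Rinf) : Prop := exists x, exists r, f x = RFin r.

Definition lsc (f : H -> Rinf) : Prop :=
  forall x r, (match f x with RFin v => r < v | RPinf => True end) ->
    exists d, d > 0 /\ forall y, hnorm (hsub y x) < d ->
      match f y with RFin v => r < v | RPinf => True end.

Definition in_dom (f : H -> Rinf) (x : H) : Prop := exists r, f x = RFin r.

Definition proximal_subgradient (f : H -> Rinf) (x p : H) : Prop :=
  exists sigma d, sigma > 0 /\ d > 0 /\
    forall y, hnorm (hsub y x) < d ->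
      match f y, f x with
      | RPinf, _ => True
      | RFin fy, RFin fx => fy >= fx + hinner H p (hsub y x) - sigma / 2 * (hnorm (hsub y x)) ^ 2
      | RFin _, RPinf => False
      end.

Definition open_set (U : H -> Prop) : Prop :=
  forall x, U x -> exists d, d > 0 /\ forall y, hnorm (hsub y x) < d -> U y.

Definition compact_set (A : H -> Prop) : Prop :=
  forall (I : Type) (U : I -> H -> Prop),
    (forall i, open_set (U i)) ->
    (forall x, A x -> exists i, U i x) ->
    exists l : list I, forall x, A x -> exists i, In i l /\ U i x.

Definition Delta2 (f : H -> Rinf) (x p : H) (t : R) (u : H) : Rbar :=
  match f (hadd H x (hscal H t u)), f x with
  | RFin a, RFin b => Fin ((a - b - t * hinner H p u) / (/ 2 * t ^ 2))
  | RPinf, RFin _ => Pinf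
  | _, RPinf => Minf (* irrelevant: only used for x in dom f *)
  end.

(* f''_-(x, p, h) = liminf_{h' -> h, t ↓ 0} Δ2 f(x,p,t,h')
                  = sup_{d>0} inf { Δ2 f(x,p,t,h') : 0 < t < d, ||h'-h|| < d } *)
Definition lower_sd (f : H -> Rinf) (x p h : H) : Rbar :=
  Rbar_sup (fun s => exists d, d > 0 /\
    s = Rbar_inf (fun v => exists t h', 0 < t < d /\ hnorm (hsub h' h) < d /\
                                        v = Delta2 f x p t h')).

Definition enlarge (A : H -> Prop) (d : R) (h : H) : Prop :=
  exists a b, A a /\ hnorm b <= d /\ h = hadd H a b.

(* "f''_-(x,p,h) >= beta holds uniformly with respect to h in A" *)
Definition uniform_lower_sd (f : H -> Rinf) (x p : H) (beta : R) (A : H -> Prop) : Prop :=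
  forall eps, eps > 0 -> exists d, d > 0 /\
    forall t h, 0 < t < d -> enlarge A d h -> Rbar_le (Fin (beta - eps)) (Delta2 f x p t h).

End Notions.

(* If [f''_-(xbar,p,h) > 0], the liminf defining it
   yields a radius [d_h] and a level [b_h > 0] with [Delta2 f(xbar,p,t,h') >= b_h]
   whenever [0 < t < d_h] and [||h' - h|| < d_h].  Finitely many balls of radius
   [d_h / 2] cover [A]; with [d] and [b] the minima of the [d_h / 2] and [b_h]
   over them, every point of [A + d B_H] lies within [d_h] of a centre [h], so
   [Delta2 >= b] there uniformly. *)
From Pilot Require Import Defs.
From Stdlib Require Import Reals Lra List Classical ClassicalEpsilon.
Open Scope R_scope.

Lemma Rbar_le_trans a b c : Rbar_le a b -> Rbar_le b c -> Rbar_le a c.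
Proof. destruct a, b, c; simpl; intros; first [tauto | lra]. Qed.

Lemma Rbar_le_Fin_eps beta x :
  (forall eps, eps > 0 -> Rbar_le (Fin (beta - eps)) x) -> Rbar_le (Fin beta) x.
Proof.
  intros Hx. destruct x as [r| |]; simpl; [| exact I | exact (Hx 1 Rlt_0_1)].
  apply Rnot_lt_le. intro Hlt.
  assert (Hpos : (beta - r) / 2 > 0) by lra.
  specialize (Hx _ Hpos). simpl in Hx. lra.
Qed.

Lemma Rbar_lub_ex (E : Rbar -> Prop) : exists s, Rbar_is_lub E s.
Proof.
  set (F := fun r => E (Fin r)).
  destruct (classic (E Pinf)) as [HP | HP].
  { exists Pinf. split; [intros [] _; exact I |].
    intros b Hb. exact (Hb _ HP). }
  destruct (classic (exists r, F r)) as [[r0 Hr0] | HF].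
  - destruct (classic (bound F)) as [Hbd | Hbd].
    + destruct (completeness F Hbd (ex_intro _ r0 Hr0)) as [l [Hl1 Hl2]].
      exists (Fin l). split.
      * intros [r| |] Hx; simpl; [exact (Hl1 r Hx) | exact (HP Hx) | exact I].
      * intros [r| |] Hb; simpl; [| exact I | exact (Hb _ Hr0)].
        apply Hl2. intros x Hx. exact (Hb _ Hx).
    + exists Pinf. split; [intros [] _; exact I |].
      intros [r| |] Hb; simpl; [| exact I | exact (Hb _ Hr0)].
      apply Hbd. exists r. intros x Hx. exact (Hb _ Hx).
  - exists Minf. split; [| intros; exact I].
    intros [r| |] Hx; simpl; [exact (HF (ex_intro _ r Hx)) | exact (HP Hx) | exact I].
Qed.

Definition Rbar_opp (x : Rbar) : Rbar :=
  match x with Fin r => Fin (- r) | Pinf => Minf | Minf => Pinf end.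

Lemma Rbar_opp_involutive x : Rbar_opp (Rbar_opp x) = x.
Proof. destruct x; simpl; try rewrite Ropp_involutive; reflexivity. Qed.

Lemma Rbar_opp_le a b : Rbar_le (Rbar_opp a) (Rbar_opp b) <-> Rbar_le b a.
Proof. destruct a, b; simpl; split; intros; first [tauto | lra]. Qed.

Lemma Rbar_glb_ex (E : Rbar -> Prop) : exists s, Rbar_is_glb E s.
Proof.
  destruct (Rbar_lub_ex (fun x => E (Rbar_opp x))) as [s [Hub Hleast]].
  exists (Rbar_opp s). split.
  - intros x Hx. apply Rbar_opp_le. rewrite Rbar_opp_involutive.
    apply Hub. rewrite Rbar_opp_involutive. exact Hx.
  - intros b Hb. apply Rbar_opp_le. rewrite Rbar_opp_involutive.
    apply Hleast. intros y Hy. apply Rbar_opp_le. rewrite Rbar_opp_involutive.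
    exact (Hb _ Hy).
Qed.

Lemma Rbar_sup_spec E : Rbar_is_lub E (Rbar_sup E).
Proof. unfold Rbar_sup. apply epsilon_spec, Rbar_lub_ex. Qed.

Lemma Rbar_inf_spec E : Rbar_is_glb E (Rbar_inf E).
Proof. unfold Rbar_inf. apply epsilon_spec, Rbar_glb_ex. Qed.

Lemma Rbar_lt_sup x E :
  Rbar_lt x (Rbar_sup E) -> exists s, E s /\ ~ Rbar_le s x.
Proof.
  intros [Hle Hne]. apply NNPP. intro Hno.
  assert (Hub : forall s, E s -> Rbar_le s x).
  { intros s Hs. apply NNPP. intro Hns. exact (Hno (ex_intro _ s (conj Hs Hns))). }
  pose proof (proj2 (Rbar_sup_spec E) x Hub) as Hsup.
  revert Hle Hne Hsup. destruct x as [r| |], (Rbar_sup E) as [q| |]; simpl;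
    intros Hle Hne Hsup; try tauto.
  apply Hne. f_equal. lra.
Qed.

Lemma Rbar_inf_pos_bound E :
  ~ Rbar_le (Rbar_inf E) (Fin 0) ->
  exists b, b > 0 /\ forall v, E v -> Rbar_le (Fin b) v.
Proof.
  pose proof (proj1 (Rbar_inf_spec E)) as Hlow.
  destruct (Rbar_inf E) as [r| |]; simpl; intros Hpos; [| | tauto].
  - exists r. split; [lra | exact Hlow].
  - exists 1. split; [lra |].
    intros v Hv. specialize (Hlow v Hv). destruct v; simpl in *; tauto.
Qed.

Lemma quadratic_nonneg_discr a b c :
  0 <= c -> (forall s, 0 <= a + 2 * s * b + s * s * c) -> b * b <= a * c.
Proof.
  intros Hc Hq. destruct (Req_dec c 0) as [-> | Hc0].
  - destruct (Req_dec b 0) as [-> | Hb0]; [lra |].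
    specialize (Hq (- (a + 1) / (2 * b))).
    replace (a + 2 * (- (a + 1) / (2 * b)) * b + _ * _ * 0) with (-1) in Hq
      by (field; exact Hb0).
    lra.
  - specialize (Hq (- b / c)).
    replace (a + 2 * (- b / c) * b + - b / c * (- b / c) * c) with (a - b * b / c) in Hq
      by (field; exact Hc0).
    replace (b * b) with (b * b / c * c) by (field; exact Hc0).
    apply Rmult_le_compat_r; lra.
Qed.

Section HilbertGeometry.
Variable H : Hilbert.

Lemma hinner_add_r (x y z : H) : hinner H x (hadd H y z) = hinner H x y + hinner H x z.
Proof. rewrite !(hinner_sym H x). apply hinner_add_l. Qed.

Lemma hinner_scal_r a (x y : H) : hinner H x (hscal H a y) = a * hinner H x y.
Proof. rewrite !(hinner_sym H x). apply hinner_scal_l. Qed.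

Lemma cauchy_schwarz (x y : H) :
  hinner H x y * hinner H x y <= hinner H x x * hinner H y y.
Proof.
  apply quadratic_nonneg_discr; [apply hinner_pos |].
  intro s. pose proof (hinner_pos H (hadd H x (hscal H s y))) as Hq.
  rewrite hinner_add_l, !hinner_add_r, !hinner_scal_l, !hinner_scal_r,
    (hinner_sym H y x) in Hq.
  lra.
Qed.

Lemma hnorm_triangle (x y : H) : hnorm (hadd H x y) <= hnorm x + hnorm y.
Proof.
  unfold hnorm.
  pose proof (sqrt_sqrt _ (hinner_pos H x)) as Sx.
  pose proof (sqrt_sqrt _ (hinner_pos H y)) as Sy.
  pose proof (sqrt_pos (hinner H x x)) as Px. pose proof (sqrt_pos (hinner H y y)) as Py.
  pose proof (cauchy_schwarz x y) as CS.
  rewrite hinner_add_l, !hinner_add_r, (hinner_sym H y x).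
  set (nx := sqrt (hinner H x x)) in *. set (ny := sqrt (hinner H y y)) in *.
  rewrite <- Sx, <- Sy in CS |- *.
  assert (Hxy : hinner H x y <= nx * ny).
  { apply Rsqr_incr_0_var; [unfold Rsqr; nra | nra]. }
  rewrite <- (sqrt_square (nx + ny)) by lra.
  apply sqrt_le_1_alt. nra.
Qed.

Lemma hnorm_sub_self (x : H) : hnorm (hsub x x) = 0.
Proof.
  unfold hnorm, hsub. rewrite hadd_opp.
  pose proof (hinner_add_l H (hzero H) (hzero H) (hzero H)) as E.
  rewrite hadd_zero in E.
  replace (hinner H (hzero H) (hzero H)) with 0 by lra. apply sqrt_0.
Qed.

Lemma hsub_chain (x y z : H) : hsub x z = hadd H (hsub x y) (hsub y z).
Proof.
  unfold hsub. rewrite (hadd_assoc H (hadd H x (hopp H y))), <- (hadd_assoc H x (hopp H y)),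
    (hadd_comm H (hopp H y) y), hadd_opp, hadd_zero.
  reflexivity.
Qed.

Lemma hsub_add_l (x y : H) : hsub (hadd H x y) x = y.
Proof.
  unfold hsub. rewrite (hadd_comm H x y), <- hadd_assoc, hadd_opp, hadd_zero. reflexivity.
Qed.

Lemma hadd_hsub (x y : H) : hadd H x (hsub y x) = y.
Proof.
  unfold hsub. rewrite hadd_comm, <- hadd_assoc, (hadd_comm H (hopp H x)), hadd_opp, hadd_zero.
  reflexivity.
Qed.

Lemma hnorm_sub_triangle (x y z : H) : hnorm (hsub x z) <= hnorm (hsub x y) + hnorm (hsub y z).
Proof. rewrite (hsub_chain x y z). apply hnorm_triangle. Qed.

Lemma open_ball (c : H) r : Defs.open_set H (fun y => hnorm (hsub y c) < r).
Proof.
  intros y Hy. exists (r - hnorm (hsub y c)). split; [lra |].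
  intros z Hz. pose proof (hnorm_sub_triangle z y c). lra.
Qed.

Lemma compact_ball_subcover (A : H -> Prop) (r : {h : H | A h} -> R) :
  compact_set H A -> (forall i, r i > 0) ->
  exists l, forall a, A a -> exists i, In i l /\ hnorm (hsub a (proj1_sig i)) < r i.
Proof.
  intros Hc Hr. apply Hc.
  - intro i. apply open_ball.
  - intros a Ha. exists (exist _ a Ha). simpl. rewrite hnorm_sub_self. apply Hr.
Qed.

End HilbertGeometry.

Fixpoint Rmin_list {I : Type} (g : I -> R) (l : list I) : R :=
  match l with nil => 1 | i :: l' => Rmin (g i) (Rmin_list g l') end.

Lemma Rmin_list_pos {I : Type} (g : I -> R) l : (forall i, g i > 0) -> Rmin_list g l > 0.
Proof.
  intros Hg. induction l as [|i l IH]; simpl; [lra |].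
  apply Rmin_glb_lt; [apply Hg | exact IH].
Qed.

Lemma Rmin_list_le {I : Type} (g : I -> R) l i : In i l -> Rmin_list g l <= g i.
Proof.
  induction l as [|j l IH]; simpl; [tauto |].
  intros [-> | Hin]; [apply Rmin_l |].
  eapply Rle_trans; [apply Rmin_r | auto].
Qed.

Section LowerSecondDerivative.
Variables (H : Hilbert) (f : H -> Rinf) (x p : H).

Definition Delta2_ge_near (h : H) (d b : R) : Prop :=
  forall t h', 0 < t < d -> hnorm (hsub h' h) < d -> Rbar_le (Fin b) (Delta2 H f x p t h').

Lemma lower_sd_ge_of_near h d b :
  d > 0 -> Delta2_ge_near h d b -> Rbar_le (Fin b) (lower_sd H f x p h).
Proof.
  intros Hd Hnear. unfold lower_sd.
  set (V := fun v => exists t h', 0 < t < d /\ hnorm (hsub h' h) < d /\ v = Delta2 H f x p t h').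
  apply Rbar_le_trans with (Rbar_inf V).
  - apply (proj2 (Rbar_inf_spec V)).
    intros v [t [h' [Ht [Hh' ->]]]]. exact (Hnear t h' Ht Hh').
  - apply (proj1 (Rbar_sup_spec _)). exists d. split; [exact Hd | reflexivity].
Qed.

Lemma lower_sd_pos_near h :
  Rbar_lt (Fin 0) (lower_sd H f x p h) ->
  exists d b, d > 0 /\ b > 0 /\ Delta2_ge_near h d b.
Proof.
  intros Hpos. destruct (Rbar_lt_sup _ _ Hpos) as [s [[d [Hd ->]] Hs]].
  destruct (Rbar_inf_pos_bound _ Hs) as [b [Hb Hlow]].
  exists d, b. split; [exact Hd | split; [exact Hb |]].
  intros t h' Ht Hh'. apply Hlow. exists t, h'. auto.
Qed.

Lemma uniform_lower_sd_ge beta A :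
  uniform_lower_sd H f x p beta A -> forall h, A h -> Rbar_le (Fin beta) (lower_sd H f x p h).
Proof.
  intros Hu h Hh. apply Rbar_le_Fin_eps. intros eps Heps.
  destruct (Hu eps Heps) as [d [Hd Hunif]].
  apply (lower_sd_ge_of_near h d); [exact Hd |].
  intros t h' Ht Hh'. apply Hunif; [exact Ht |].
  exists h, (hsub h' h). repeat split; [exact Hh | lra | symmetry; apply hadd_hsub].
Qed.

Lemma compact_uniform_lower_sd A :
  compact_set H A -> (forall h, A h -> Rbar_lt (Fin 0) (lower_sd H f x p h)) ->
  exists beta, beta > 0 /\ uniform_lower_sd H f x p beta A.
Proof.
  intros Hc Hpos.
  destruct (choice (fun (i : {h : H | A h}) (db : R * R) =>
      fst db > 0 /\ snd db > 0 /\ Delta2_ge_near (proj1_sig i) (fst db) (snd db)))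
    as [db Hdb].
  { intros [h Hh]. destruct (lower_sd_pos_near h (Hpos h Hh)) as [d [b Hnear]].
    exists (d, b). exact Hnear. }
  set (rad := fun i => fst (db i) / 2).
  destruct (compact_ball_subcover H A rad Hc) as [l Hcover].
  { intro i. unfold rad. destruct (Hdb i) as [Hd _]. lra. }
  exists (Rmin_list (fun i => snd (db i)) l). split.
  { apply Rmin_list_pos. intro i. apply (Hdb i). }
  intros eps Heps. exists (Rmin_list rad l). split.
  { apply Rmin_list_pos. intro i. unfold rad. destruct (Hdb i) as [Hd _]. lra. }
  intros t h Ht [a [u [Ha [Hu ->]]]].
  destruct (Hcover a Ha) as [i [Hin Hai]].
  pose proof (Rmin_list_le rad l i Hin) as Hrad.
  pose proof (Rmin_list_le (fun i => snd (db i)) l i Hin) as Hb.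
  destruct (Hdb i) as [Hd [_ Hnear]]. unfold rad in *. simpl in Hb.
  apply Rbar_le_trans with (Fin (snd (db i))); [simpl; lra |].
  apply Hnear; [lra |].
  pose proof (hnorm_sub_triangle H (hadd H a u) a (proj1_sig i)) as Htri.
  rewrite hsub_add_l in Htri. lra.
Qed.

End LowerSecondDerivative.

Theorem proposition5p1 (H : Hilbert) (f : H -> Rinf) (xbar p : H) (A : H -> Prop) :
  proper H f -> lsc H f -> in_dom H f xbar -> proximal_subgradient H f xbar p ->
  (exists a, A a) -> compact_set H A ->
  ((exists beta, beta > 0 /\ uniform_lower_sd H f xbar p beta A) <->
   (exists beta, beta > 0 /\ forall h, A h -> Rbar_le (Fin beta) (lower_sd H f xbar p h))) /\
  ((exists beta, beta > 0 /\ forall h, A h -> Rbar_le (Fin beta) (lower_sd H f xbar p h)) <->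
   (forall h, A h -> Rbar_lt (Fin 0) (lower_sd H f xbar p h))).
Proof.
  intros _ _ _ _ _ Hc.
  assert (i_ii : (exists beta, beta > 0 /\ uniform_lower_sd H f xbar p beta A) ->
    exists beta, beta > 0 /\ forall h, A h -> Rbar_le (Fin beta) (lower_sd H f xbar p h)).
  { intros [beta [Hb Hu]]. exists beta. split; [exact Hb |].
    exact (uniform_lower_sd_ge H f xbar p beta A Hu). }
  assert (ii_iii : (exists beta, beta > 0 /\ forall h, A h -> Rbar_le (Fin beta) (lower_sd H f xbar p h)) ->
    forall h, A h -> Rbar_lt (Fin 0) (lower_sd H f xbar p h)).
  { intros [beta [Hb Hge]] h Hh. specialize (Hge h Hh). split.
    - apply Rbar_le_trans with (Fin beta); [simpl; lra | exact Hge].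
    - intro E. rewrite <- E in Hge. simpl in Hge. lra. }
  pose proof (compact_uniform_lower_sd H f xbar p A Hc) as iii_i.
  split; split; auto.
Qed.
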